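(* For $n\ge 2$, let $G^2_n$ be the graph obtained from an edge $u_1u_2$ by adding a set $X$ of $n-2$ new vertices, each adjacent to both $u_1$ and $u_2$ (and no other edges). Then $G^2_n$ is $2$-degenerate and $\mathrm{id}^{\leq 3}(G^2_n)=n-1$. Moreover, $\mathrm{conv}^{\leq 3}(G^2_n)=n-1$ if $n$ is even and $\mathrm{conv}^{\leq 3}(G^2_n)=n-2$ if $n$ is odd.
   Context: A graph is $k$-degenerate if its vertices can be ordered so that each vertex has at most $k$ neighbours later in the order. For an oriented graph $D$ and $X\subseteq V(D)$, the inversion of $X$ reverses every arc with both endvertices in $X$; a $(\leq p)$-inversion is the inversion of a set of at most $p$ vertices. $\mathrm{id}^{\leq p}(G)$ is the maximum, over all ordered pairs $(\vec G_1,\vec G_2)$ of orientations of $G$, of the minimum number of $(\leq p)$-inversions transforming $\vec G_1$ into $\vec G_2$. $\mathrm{conv}^{\leq p}(G)$ is the minimum number of $(\leq p)$-inversions transforming an orientation of $G$ into its converse (all arcs reversed); it does not depend on the orientation. *)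

From mathcomp Require Import all_boot all_order.
Set Implicit Arguments. Unset Strict Implicit. Unset Printing Implicit Defensive.

(* A simple graph on a finite type T is given by an edge relation e
   (assumed symmetric and irreflexive where relevant). *)

Definition degenerate (T : finType) (e : rel T) (k : nat) : Prop :=
  exists r : T -> nat, injective r /\
    forall x : T, #|[set y | e x y && (r x < r y)%N]| <= k.

(* An orientation of the graph (T, e): a relation o with o x y meaning the arc
   x -> y; only edges are oriented, and each edge in exactly one direction. *)
Definition is_orientation (T : finType) (e : rel T) (o : T -> T -> bool) : Prop :=
  forall x y : T, (o x y -> e x y) /\ (e x y -> o x y != o y x).

Definition invert (T : finType) (X : {set T}) (o : T -> T -> bool) : T -> T -> bool :=
  fun x y => if (x \in X) && (y \in X) then o y x else o x y.

Definition invert_seq (T : finType) (Xs : seq {set T}) (o : T -> T -> bool)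
  : T -> T -> bool := foldl (fun o' X => invert X o') o Xs.

Definition converse (T : finType) (o : T -> T -> bool) : T -> T -> bool :=
  fun x y => o y x.

Definition transformable_le (T : finType) (p : nat) (o1 o2 : T -> T -> bool)
  (k : nat) : Prop :=
  exists Xs : seq {set T}, size Xs <= k /\ all (fun X : {set T} => #|X| <= p) Xs /\
    forall x y, invert_seq Xs o1 x y = o2 x y.

Definition inv_dist_is (T : finType) (p : nat) (o1 o2 : T -> T -> bool)
  (k : nat) : Prop :=
  transformable_le p o1 o2 k /\ forall j, transformable_le p o1 o2 j -> k <= j.

Definition id_le_is (T : finType) (e : rel T) (p k : nat) : Prop :=
  (forall o1 o2, is_orientation e o1 -> is_orientation e o2 ->
     exists j, j <= k /\ inv_dist_is p o1 o2 j) /\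
  (exists o1 o2, is_orientation e o1 /\ is_orientation e o2 /\
     inv_dist_is p o1 o2 k).

Definition conv_le_is (T : finType) (e : rel T) (p k : nat) : Prop :=
  forall o, is_orientation e o -> inv_dist_is p o (converse o) k.

(* G^2_n on vertex set 'I_n: u1 = 0, u2 = 1, X = {2, ..., n-1}; edges u1u2 and
   u_i x for x in X. *)
Definition G2 (n : nat) : rel 'I_n :=
  fun x y => (x != y) && ((x < 2)%N || (y < 2)%N).
Arguments G2 n : clear implicits.

From mathcomp Require Import all_boot all_order zify.
From Stdlib Require Import Classical.
Set Implicit Arguments. Unset Strict Implicit. Unset Printing Implicit Defensive.

(* Inverting the sets of a sequence turns one orientation into another iff
   every edge whose arc must change lies in an odd number of the sets, and
   every other edge in an even number.  With [X] the vertices other than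
   [u1] and [u2], the sets [{i} ∪ {u | ui must change}] for [i ∈ X], plus
   possibly [{u1, u2}] to correct the parity on [u1u2], give at most [n - 1]
   inversions of size at most 3.  Conversely, suppose all [2 (n - 2)] edges
   between [{u1, u2}] and [X] must change.  A set of at most three vertices
   contains at most two of them, and exactly two only if it contains an
   even number of edges at [u1]; counting edges at [u1] modulo 2 then forces
   [n - 1] inversions when [n + [u1u2 must change]] is odd, and [n - 2]
   otherwise.  For the converse orientation every arc changes; for [id] the
   extremal pair reverses every arc except, when [n] is odd, [u1u2]. *)

Section Inversions.
Variable T : finType.
Implicit Types (e : rel T) (o : T -> T -> bool) (Xs : seq {set T}).

Definition differ o1 o2 : rel T := fun x y => o1 x y != o2 x y.

Definition pair_count Xs (x y : T) : nat :=
  count (fun X : {set T} => (x \in X) && (y \in X)) Xs.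

Lemma pair_countC Xs x y : pair_count Xs x y = pair_count Xs y x.
Proof. by apply: eq_count => X; rewrite andbC. Qed.

Lemma pair_count_sum Xs x y :
  pair_count Xs x y = \sum_(X <- Xs) ((x \in X) && (y \in X)).
Proof. by rewrite /pair_count -sum1_count big_mkcond. Qed.

Lemma differC e o1 o2 x y : is_orientation e o1 -> is_orientation e o2 ->
  e x y -> differ o1 o2 y x = differ o1 o2 x y.
Proof.
move=> h1 h2 exy; rewrite /differ.
have [_ /(_ exy)] := h1 x y; have [_ /(_ exy)] := h2 x y.
by case: (o1 x y); case: (o1 y x); case: (o2 x y); case: (o2 y x).
Qed.

Lemma invert_seqE Xs o x y :
  invert_seq Xs o x y = if odd (pair_count Xs x y) then o y x else o x y.
Proof.
elim: Xs o => [|X Xs IH] o //=.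
rewrite /invert_seq /= -/(invert_seq _ _) IH /invert /pair_count /= oddD.
by case: (x \in X); case: (y \in X); case: (odd _).
Qed.

Lemma orientation_nonedge e o x y :
  is_orientation e o -> e x y = false -> o x y = false.
Proof. by move=> ho exy; apply/negP => /(proj1 (ho x y)); rewrite exy. Qed.

Lemma invert_seq_orientationP e o1 o2 Xs :
  symmetric e -> is_orientation e o1 -> is_orientation e o2 ->
  (forall x y, invert_seq Xs o1 x y = o2 x y) <->
  (forall x y, e x y -> odd (pair_count Xs x y) = differ o1 o2 x y).
Proof.
move=> esym h1 h2; rewrite /differ; split=> H x y.
  move=> exy; have := H x y; rewrite invert_seqE.
  have [_ /(_ exy)] := h1 x y.
  by case: (o1 x y); case: (o1 y x); case: (o2 x y); case: (odd _).
rewrite invert_seqE; case exy: (e x y).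
  have := H x y exy; have [_ /(_ exy)] := h1 x y.
  by case: (o1 x y); case: (o1 y x); case: (o2 x y); case: (odd _).
have eyx : e y x = false by rewrite esym.
by rewrite !(orientation_nonedge h1) ?(orientation_nonedge h2) //; case: (odd _).
Qed.

Lemma is_orientation_invert e o X :
  symmetric e -> is_orientation e o -> is_orientation e (invert X o).
Proof.
move=> esym ho x y; rewrite /invert andbC.
have [oe exy] := ho x y; have [oe' _] := ho y x.
split; first by case: ifP => _ // /oe'; rewrite esym.
by case: ifP => _ /exy //; rewrite eq_sym.
Qed.

Lemma is_orientation_invert_seq e o Xs :
  symmetric e -> is_orientation e o -> is_orientation e (invert_seq Xs o).
Proof.
move=> esym; elim: Xs o => [|X Xs IH] o ho //=.
by apply: IH; apply: is_orientation_invert.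
Qed.

Lemma is_orientation_converse e o :
  symmetric e -> is_orientation e o -> is_orientation e (converse o).
Proof.
move=> esym ho x y; rewrite /converse esym; have [oe exy] := ho y x.
by split=> // /exy; rewrite eq_sym.
Qed.

Lemma transformable_le_mono p o1 o2 a b :
  a <= b -> transformable_le p o1 o2 a -> transformable_le p o1 o2 b.
Proof. by move=> ab [Xs [s H]]; exists Xs; split=> //; apply: leq_trans ab. Qed.

Lemma transformable_le_inv_dist p o1 o2 k :
  transformable_le p o1 o2 k -> exists2 j, j <= k & inv_dist_is p o1 o2 j.
Proof.
elim: k => [|k IH] hk; first by exists 0.
case: (classic (transformable_le p o1 o2 k)) => [/IH [j jk hj]|hk'].
  by exists j => //; apply: leqW.
exists k.+1 => //; split=> // j hj; rewrite ltnNge; apply/negP => jk.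
by apply: hk'; apply: transformable_le_mono hj.
Qed.

End Inversions.

Lemma ltn_orientation n (e : rel 'I_n) :
  symmetric e -> irreflexive e -> is_orientation e (fun x y => e x y && (x < y)).
Proof.
move=> esym eirr x y; split=> [/andP [] //|exy].
rewrite (esym y x) exy /=; move: exy; case: (ltngtP x y) => // /val_inj ->.
by rewrite eirr.
Qed.

Lemma odd_sum_le (I : Type) (r : seq I) (f : I -> nat) :
  odd (\sum_(i <- r) f i) <= \sum_(i <- r) odd (f i).
Proof.
elim: r => [|i r IH]; first by rewrite !big_nil.
rewrite !big_cons oddD; apply: leq_trans (leq_add (leqnn _) IH).
by case: (odd (f i)); case: (odd _).
Qed.

Section G2_graph.
Variable m : nat.
Local Notation T := 'I_m.+2.
Local Notation G := (G2 m.+2).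

Definition u1 : T := ord0.
Definition u2 : T := @Ordinal m.+2 1 isT.

Lemma G2_sym : symmetric G.
Proof. by move=> x y; rewrite /G2 eq_sym orbC. Qed.

Lemma G2_irr : irreflexive G.
Proof. by move=> x; rewrite /G2 eqxx. Qed.

Lemma G2_hub (u i : T) : u < 2 -> 1 < i -> G u i.
Proof.
move=> hu hi; rewrite /G2 hu andbT.
by apply: contraTneq hi => <-; rewrite -leqNgt.
Qed.

Lemma G2_cols (i j : T) : 1 < i -> 1 < j -> G i j = false.
Proof. by rewrite /G2 !ltnNge => /negbTE -> /negbTE ->; rewrite andbF. Qed.

Lemma hubP (u : T) : u < 2 -> u = u1 \/ u = u2.
Proof. by case: u => [[|[|u]] hu] // _; [left|right]; apply: val_inj. Qed.

Lemma hub_col_neq (u i : T) : u < 2 -> 1 < i -> (i == u) = false.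
Proof. by move=> hu hi; apply: contraTF hi => /eqP ->; rewrite -leqNgt. Qed.

Lemma G2_degenerate : degenerate G 2.
Proof.
exists (fun x : T => if x < 2 then m.+2 + x else val x); split.
  move=> [x hx] [y hy] /= hxy; apply: val_inj => /=; move: hxy.
  by case: ifP; case: ifP => ? ? ? //; lia.
move=> x; apply: (@leq_trans #|[set u1; u2]|); last by rewrite cards2.
apply: subset_leq_card; apply/subsetP => y; rewrite !inE /G2.
case: x y => [x hx] [y hy] /=; rewrite -!val_eqE /=.
by case: ifP; case: ifP => ? ? /andP [/andP [_ ?] ?]; lia.
Qed.

Lemma sum_hubs_cols (F : T -> nat) :
  \sum_(i : T) F i = F u1 + F u2 + \sum_(i : T | 1 < i) F i.
Proof.
rewrite (bigD1 u1) //= (bigD1 u2) //= addnA; congr (_ + _).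
by apply: eq_bigl => -[[|[|i]] hi].
Qed.

Lemma sum_cols1 : \sum_(i : T | 1 < i) 1 = m.
Proof. by have := sum_hubs_cols (fun=> 1); rewrite sum1_card card_ord => -[]. Qed.

Lemma card_hubs_cols (X : {set T}) :
  #|X| = (u1 \in X) + (u2 \in X) + \sum_(i : T | 1 < i) (i \in X).
Proof. by rewrite -sum1_card -sum_hubs_cols big_mkcond. Qed.

Section UpperBound.
Variables o1 o2 : T -> T -> bool.
Hypotheses (ho1 : is_orientation G o1) (ho2 : is_orientation G o2).
Local Notation D := (differ o1 o2).

Lemma differ_cols (i j : T) : 1 < i -> 1 < j -> D i j = false.
Proof.
by move=> hi hj; rewrite /differ !(orientation_nonedge _ (G2_cols hi hj)).
Qed.

Definition column_set (i : T) : {set T} := i |: [set x | D x i].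

Definition column_sets : seq {set T} :=
  [seq column_set i | i <- [seq i : T <- index_enum T | 1 < i]].

Definition parity_fix : bool := odd (pair_count column_sets u1 u2) != D u1 u2.

Definition G2_inversions : seq {set T} :=
  column_sets ++ nseq parity_fix [set u1; u2].

Lemma pair_count_column_sets x y :
  pair_count column_sets x y =
  \sum_(i : T | 1 < i) ((x \in column_set i) && (y \in column_set i)).
Proof. by rewrite pair_count_sum big_map big_filter. Qed.

Lemma pair_count_G2_inversions x y :
  pair_count G2_inversions x y =
  pair_count column_sets x y +
  parity_fix * ((x \in [set u1; u2]) && (y \in [set u1; u2])).
Proof. by rewrite /pair_count count_cat count_nseq mulnC. Qed.

Lemma pair_count_hub_col (u j : T) : u < 2 -> 1 < j ->
  pair_count G2_inversions u j = D u j.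
Proof.
move=> hu hj.
have jX : j \in [set u1; u2] = false.
  by rewrite !inE !(hub_col_neq _ hj).
rewrite pair_count_G2_inversions jX andbF muln0 addn0 pair_count_column_sets.
rewrite (bigD1 j) //= big1 => [|i /andP [hi /negbTE ji]].
  by rewrite !inE eqxx eq_sym (hub_col_neq hu hj) /= andbT addn0.
by rewrite !inE (eq_sym j) ji (differ_cols hj hi) andbF.
Qed.

Lemma odd_pair_count_hubs : odd (pair_count G2_inversions u1 u2) = D u1 u2.
Proof.
rewrite pair_count_G2_inversions !inE !eqxx orbT /= muln1 oddD /parity_fix.
by case: (odd _); case: (D u1 u2).
Qed.

Lemma odd_pair_count_G2_inversions x y :
  G x y -> odd (pair_count G2_inversions x y) = D x y.
Proof.
wlog hx : x y / x < 2.
  move=> hwlog gxy; case: (ltnP x 2) => hx; first exact: hwlog.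
  have hy : y < 2 by move: gxy; rewrite /G2 ltnNge hx => /andP [_].
  by rewrite pair_countC -(differC ho1 ho2 gxy) hwlog // G2_sym.
move=> gxy; case: (ltnP y 2) => hy; last by rewrite pair_count_hub_col // oddb.
move: gxy; case: (hubP hx) => ->; case: (hubP hy) => ->;
  rewrite ?G2_irr // => g21.
  exact: odd_pair_count_hubs.
by rewrite pair_countC -(differC ho1 ho2 g21) odd_pair_count_hubs.
Qed.

Lemma size_G2_inversions : size G2_inversions = m + parity_fix.
Proof.
by rewrite size_cat size_map size_filter size_nseq -sum1_count sum_cols1.
Qed.

Lemma card_column_set (i : T) : 1 < i -> #|column_set i| <= 3.
Proof.
move=> hi.
rewrite cardsU1 -[3]/(1 + 2); apply: leq_add; first by case: (_ \notin _).
apply: (@leq_trans #|[set u1; u2]|); last by rewrite cards2.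
apply: subset_leq_card; apply/subsetP => x; rewrite !inE.
case: (ltnP x 2) => [/hubP [] -> | hx]; rewrite ?eqxx ?orbT //.
by rewrite differ_cols.
Qed.

Lemma G2_transformable : transformable_le 3 o1 o2 (m + parity_fix).
Proof.
exists G2_inversions; rewrite size_G2_inversions; split=> //; split.
  rewrite all_cat; apply/andP; split; apply/allP => X.
    case/mapP => i; rewrite mem_filter => /andP [hi _] ->.
    exact: card_column_set.
  by case/nseqP => -> _; rewrite cards2.
apply/(invert_seq_orientationP _ G2_sym ho1 ho2) => x y.
exact: odd_pair_count_G2_inversions.
Qed.

End UpperBound.

(* For a set with [b1], [b2] telling whether it contains [u1], [u2] and
   [k] vertices in X: the edges between [{u1, u2}] and X it contains, plus
   the parity of its edges at [u1], number at most 2. *)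
Lemma small_set_weight (b1 b2 : bool) k :
  b1 + b2 + k <= 3 -> b1 * k + b2 * k + odd (b1 * b2 + b1 * k) <= 2.
Proof. by case: b1; case: b2; case: k => [|[|[|[|k]]]]. Qed.

Lemma pair_count_lower_bound (Xs : seq {set T}) :
  all (fun X : {set T} => #|X| <= 3) Xs ->
  (forall u i : T, u < 2 -> 1 < i -> odd (pair_count Xs u i)) ->
  2 * m + (odd (pair_count Xs u1 u2) (+) odd m) <= 2 * size Xs.
Proof.
move=> small hodd.
pose k (X : {set T}) := \sum_(i : T | 1 < i) (i \in X).
have sum_hub_cols (u : T) :
    \sum_(X <- Xs) (u \in X) * k X = \sum_(i : T | 1 < i) pair_count Xs u i.
  under eq_bigr do rewrite big_distrr.
  rewrite exchange_big; apply: eq_bigr => i _; rewrite pair_count_sum.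
  by apply: eq_bigr => X _; case: (u \in X); case: (i \in X).
have cols_ge (u : T) : u < 2 -> m <= \sum_(i : T | 1 < i) pair_count Xs u i.
  move=> hu; apply: (@leq_trans (\sum_(i : T | 1 < i) 1)).
    by rewrite sum_cols1.
  by apply: leq_sum => i hi; have := hodd u i hu hi; case: pair_count.
have odd_cols : odd (\sum_(i : T | 1 < i) pair_count Xs u1 i) = odd m.
  rewrite -[in RHS]sum_cols1.
  apply: (big_ind2 (fun a b => odd a = odd b)) => //.
    by move=> a b c d ea eb; rewrite !oddD ea eb.
  by move=> i hi; rewrite hodd.
have weight : \sum_(X <- Xs) ((u1 \in X) * k X + (u2 \in X) * k X +
    odd ((u1 \in X) * (u2 \in X) + (u1 \in X) * k X)) <= 2 * size Xs.
  rewrite -sum1_size big_distrr /= big_seq [X in _ <= X]big_seq.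
  apply: leq_sum => X /(allP small) hX.
  by apply: small_set_weight; rewrite -card_hubs_cols.
have sum_hubs : \sum_(X <- Xs) (u1 \in X) * (u2 \in X) = pair_count Xs u1 u2.
  rewrite pair_count_sum; apply: eq_bigr => X _.
  by case: (u1 \in X); case: (u2 \in X).
have parity :=
  odd_sum_le Xs (fun X => (u1 \in X) * (u2 \in X) + (u1 \in X) * k X).
rewrite big_split /= sum_hub_cols sum_hubs oddD odd_cols in parity.
rewrite !big_split /= !sum_hub_cols in weight.
have := cols_ge u1 isT; have := cols_ge u2 isT.
move: weight parity; set c := _ (+) _; set w := \sum_(X <- Xs) _.
lia.
Qed.

Lemma G2_inv_dist o1 o2 : is_orientation G o1 -> is_orientation G o2 ->
  (forall u i : T, u < 2 -> 1 < i -> differ o1 o2 u i) ->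
  inv_dist_is 3 o1 o2 (m + (differ o1 o2 u1 u2 (+) odd m)).
Proof.
move=> h1 h2 hcols; split.
  suff <- : parity_fix o1 o2 = differ o1 o2 u1 u2 (+) odd m.
    exact: G2_transformable.
  rewrite /parity_fix pair_count_column_sets (eq_bigr (fun=> 1)) ?sum_cols1.
    by rewrite negb_eqb addbC.
  by move=> i hi; rewrite !inE !hcols ?orbT.
move=> j [Xs [size_le [small inv]]].
have par := proj1 (invert_seq_orientationP _ G2_sym h1 h2) inv.
have hodd (u i : T) : u < 2 -> 1 < i -> odd (pair_count Xs u i).
  by move=> hu hi; rewrite par ?G2_hub ?hcols.
have := pair_count_lower_bound small hodd.
rewrite par //; move: size_le; set s := size Xs; case: (_ (+) _) => /=; lia.
Qed.

Lemma G2_conv : conv_le_is G 3 (m + ~~ odd m).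
Proof.
move=> o ho; have hc := is_orientation_converse G2_sym ho.
have differ_conv x y : G x y -> differ o (converse o) x y.
  by move=> gxy; have [_ /(_ gxy)] := ho x y.
have := G2_inv_dist ho hc (fun u i hu hi => differ_conv u i (G2_hub hu hi)).
by rewrite differ_conv.
Qed.

Lemma G2_id : id_le_is G 3 m.+1.
Proof.
split=> [o1 o2 h1 h2|].
  have [j jle hj] := transformable_le_inv_dist (G2_transformable h1 h2).
  exists j; split=> //; apply: leq_trans jle _.
  by rewrite -addn1 leq_add2l leq_b1.
pose o1 x y := G x y && (x < y).
have h1 : is_orientation G o1 := ltn_orientation G2_sym G2_irr.
pose Xs := setT :: nseq (odd m) [set u1; u2].
have h2 : is_orientation G (invert_seq Xs o1).
  exact: is_orientation_invert_seq G2_sym h1.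
have par := proj1 (invert_seq_orientationP _ G2_sym h1 h2) (fun x y => erefl).
have pcE x y : pair_count Xs x y =
    1 + odd m * ((x \in [set u1; u2]) && (y \in [set u1; u2])).
  by rewrite /pair_count /= count_nseq !inE mulnC.
exists o1, (invert_seq Xs o1); do 2!split=> //.
have hcols (u i : T) : u < 2 -> 1 < i -> differ o1 (invert_seq Xs o1) u i.
  move=> hu hi; rewrite -par ?G2_hub // pcE !inE !(hub_col_neq _ hi) //.
  by rewrite orbF andbF muln0.
have := G2_inv_dist h1 h2 hcols.
by rewrite -par // pcE !inE !eqxx /= muln1 addnC; case: (odd m).
Qed.

End G2_graph.

Theorem mainTheorem17 (n : nat) (hn : 2 <= n) :
  degenerate (G2 n) 2 /\
  id_le_is (G2 n) 3 (n - 1) /\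
  (~~ odd n -> conv_le_is (G2 n) 3 (n - 1)) /\
  (odd n -> conv_le_is (G2 n) 3 (n - 2)).
Proof.
case: n hn => [|[|m]] // _; rewrite !subSS !subn0 !oddS !negbK.
split; first exact: G2_degenerate.
split; first exact: G2_id.
by split=> [/negPf hm | hm]; have := @G2_conv m; rewrite hm ?addn1 ?addn0.
Qed.
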